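(* Let $\mathcal{T}$ be a triangulation of $C(m,2d+1)$ with a mutable $d$-simplex $A\in\operatorname{simp}(\mathcal{T})$ which is replaced by the $(d+1)$-simplex $B=(b_0,\dots,b_{d+1})$ in the increasing flip. Then $B'=(b_1,b_2,\dots,b_d)$ is the unique support of $A$ with respect to $\operatorname{simp}(\mathcal{T})$.
   Context: $C(V,n)$ is the cyclic polytope on a finite ordered set $V$ (convex hull of $(t_v,\dots,t_v^n)$, $t_v$ increasing); a triangulation is a set of $(n+1)$-subsets of $V$ whose geometric simplices form a simplicial complex covering $C(V,n)$; its simplices include all faces (subsets) of its members. A $k$-simplex is a $(k+1)$-subset, always written in increasing order $A=(a_0,a_1,\dots)$. An $n$-subset $F\subseteq V$ is a lower (upper) facet of $C(V,n)$ iff every $w\in V\setminus F$ has an even (odd) number of elements of $F$ greater than it. A $d$-simplex $A\subseteq[m]$ is internal for $C(m,2d+1)$ if it lies in no facet of $C(m,2d+1)$; equivalently $a_{i+1}\geq a_i+2$ for all $i$, $a_d\leq a_0+m-2$, $a_0\neq 1$, $a_d\neq m$ (the set of these is denoted $\nu_{m,d}$ here). $\operatorname{simp}(\mathcal{T})$ is the set of internal $d$-simplices that are faces of simplices of $\mathcal{T}$. For a $d$-subset $\Sigma$ (size $d$) and a $(d+1)$-subset $A$, write $\Sigma\wr A$ if $a_0<\sigma_0<a_1<\dots<\sigma_{d-1}<a_d$; for a $(d+1)$-subset $A$ and a $(d+2)$-subset $B$, write $A\wr B$ if $b_0<a_0<b_1<\dots<a_d<b_{d+1}$. For $|U|=2d+3$,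 $C(U,2d+1)$ has two triangulations, the lower one (lower facets of $C(U,2d+2)$) and the upper one (upper facets). $A\in\operatorname{simp}(\mathcal{T})$ is a mutable $d$-simplex replaced by the $(d+1)$-simplex $B$ if $A\wr B$, $C(A\cup B,2d+1)$ is a subpolytope of $\mathcal{T}$ (i.e. $\{S\in\mathcal{T}:S\subseteq A\cup B\}$ triangulates it), and the induced triangulation is the lower one; the increasing flip replaces it by the upper triangulation. For $\mathbf{X}\subseteq\nu_{m,d}$ and $A\in\mathbf{X}$, a $(d-1)$-simplex $\Sigma$ (a $d$-subset) is a support for $A$ if $\Sigma\wr A$ and every $C\in\nu_{m,d}$ with $C\subseteq A\cup\Sigma$ lies in $\mathbf{X}$. *)

From HB Require Import structures.
From mathcomp Require Import all_boot all_order all_algebra.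
Set Implicit Arguments. Unset Strict Implicit. Unset Printing Implicit Defensive.
Import Order.TTheory GRing.Theory Num.Theory.

(* Vertices of C(m,n) are 1..m, represented as the nonzero elements of 'I_m.+1. *)
Definition Vm (m : nat) : {set 'I_m.+1} := [set v : 'I_m.+1 | 0 < val v].

Definition elems (m : nat) (S : {set 'I_m.+1}) : seq nat :=
  sort leq [seq val i | i <- enum S].

Definition interlace (s t : seq nat) : bool :=
  (size t == (size s).+1) &&
  all (fun i => (nth 0 t i < nth 0 s i) && (nth 0 s i < nth 0 t i.+1))
      (iota 0 (size s)).

Section Geometry.
Local Open Scope ring_scope.
Variables (R : realFieldType) (n m : nat) (t : 'I_m.+1 -> R).

Definition mpoint (v : 'I_m.+1) : 'rV[R]_n := \row_(k < n) (t v ^+ k.+1).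

Definition in_conv (S : {set 'I_m.+1}) (x : 'rV[R]_n) : Prop :=
  exists lam : 'I_m.+1 -> R,
    [/\ forall v, 0 <= lam v,
        forall v, v \notin S -> lam v = 0,
        \sum_v lam v = 1
      & x = \sum_v lam v *: mpoint v].

(* T is a triangulation of the cyclic polytope C(U,n): a set of (n+1)-subsets
   of U whose geometric simplices intersect properly (pairwise intersection is
   the common face spanned by the common vertices) and cover conv(U). *)
Definition triangulates (U : {set 'I_m.+1}) (T : {set {set 'I_m.+1}}) : Prop :=
  [/\ forall S, S \in T -> S \subset U /\ #|S| = n.+1,
      forall S1 S2, S1 \in T -> S2 \in T -> forall x,
        (in_conv S1 x /\ in_conv S2 x) <-> in_conv (S1 :&: S2) x
    & forall x, in_conv U x -> exists2 S, S \in T & in_conv S x].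
End Geometry.

(* lower triangulation of C(U,n) for |U| = n+2: the lower facets of C(U,n+1),
   i.e. (n+1)-subsets F of U s.t. every w in U \ F has an even number of
   elements of F greater than it. *)
Definition lower_tri (n m : nat) (U : {set 'I_m.+1}) : {set {set 'I_m.+1}} :=
  [set F : {set 'I_m.+1} | [&& F \subset U, #|F| == n.+1 &
     [forall w in U :\: F, ~~ odd #|[set f in F | w < f]| ]]].

(* nu_{m,d}: internal d-simplices of C(m,2d+1) *)
Definition nu (m d : nat) (A : {set 'I_m.+1}) : bool :=
  let a := elems A in
  [&& #|A| == d.+1, A \subset Vm m,
      all (fun i => nth 0 a i + 2 <= nth 0 a i.+1) (iota 0 d),
      nth 0 a d + 2 <= nth 0 a 0 + m,
      nth 0 a 0 != 1 & nth 0 a d != m].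

Definition simp (m d : nat) (T : {set {set 'I_m.+1}}) : {set {set 'I_m.+1}} :=
  [set A : {set 'I_m.+1} | nu d A && [exists S in T, A \subset S]].

Definition is_support (m d : nat) (X : {set {set 'I_m.+1}})
    (A Sigma : {set 'I_m.+1}) : Prop :=
  [/\ #|Sigma| = d, Sigma \subset Vm m,
      interlace (elems Sigma) (elems A)
    & forall C : {set 'I_m.+1}, nu d C -> C \subset A :|: Sigma -> C \in X].

Definition inner (m d : nat) (B : {set 'I_m.+1}) : {set 'I_m.+1} :=
  [set x in B | (val x != nth 0 (elems B) 0) && (val x != nth 0 (elems B) d.+1)].

From HB Require Import structures.
From mathcomp Require Import all_boot all_order all_algebra.
From mathcomp Require Import zify ring.
Import Order.TTheory GRing.Theory Num.Theory.

Set Implicit Arguments. Unset Strict Implicit. Unset Printing Implicit Defensive.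

(** Any [n + 2] points [W] on the moment curve carry an affine dependence
    whose sign at [v] is [(-1) ^ k], where [k] counts the points of [W] above
    [v] (evaluate the dependence on the polynomial vanishing on [W] minus two
    points).  Hence the points of [W] with an odd, resp. even, number of points
    above them span simplices with intersecting relative interiors, and no two
    simplices of a triangulation of [C(m, n)] can contain the two halves.  For
    [n = 2d + 1] the halves of [C :|: D] are [C] and [D] whenever the
    d-simplex [C] interlaces the (d+1)-simplex [D].

    Since [T] induces the lower triangulation on [A :|: B], its facets
    [(A :|: B) :\ b], [b \in B], belong to [T].  An internal d-simplex inside
    [A :|: B'] misses [b_0], so it lies in such a facet: [B'] is a support.  If
    [Sigma] is a support with [sigma_i != b_(i+1)], exchanging [sigma_i] for
    a neighbouring [a_j], and [a_j] for a neighbouring [b], gives a d-simplex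
    of [simp T] inside [A :|: Sigma] interlacing a (d+1)-simplex inside some
    facet [(A :|: B) :\ b]: impossible. *)

(** * Sorted sequences and interlacing *)

Lemma sorted_ltn_nthE (s : seq nat) i j : sorted ltn s ->
  i < size s -> j < size s -> (nth 0 s i < nth 0 s j) = (i < j).
Proof.
move=> s_sorted lt_is lt_js; have mono := sorted_ltn_nth ltn_trans 0 s_sorted.
case: (ltngtP i j) => [lt_ij|lt_ji|->]; last by rewrite ltnn.
  exact: mono.
by apply/negbTE; rewrite -leqNgt ltnW // mono.
Qed.

Lemma sorted_leq_nthE (s : seq nat) i j : sorted ltn s ->
  i < size s -> j < size s -> (nth 0 s i <= nth 0 s j) = (i <= j).
Proof. by move=> s_sorted lt_is lt_js; rewrite leqNgt sorted_ltn_nthE // -leqNgt. Qed.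

Lemma sorted_within (s : seq nat) x : sorted ltn s -> x \in s ->
  nth 0 s 0 <= x <= nth 0 s (size s).-1.
Proof.
move=> s_sorted /(nthP 0) [i lt_is <-].
have lt_0s : 0 < size s := leq_ltn_trans (leq0n i) lt_is.
by rewrite !sorted_leq_nthE ?ltn_predL // leq0n -ltnS prednK.
Qed.

Lemma count_ltn_sorted (s : seq nat) x j : j <= size s ->
    (forall i, i < size s -> (x < nth 0 s i) = (j <= i)) ->
  count (fun y => x < y) s = size s - j.
Proof.
move=> le_js above; rewrite -{1}[s](cat_take_drop j) count_cat.
have size_take_j : size (take j s) = j by rewrite size_takel.
rewrite (@eq_in_count _ _ pred0) ?count_pred0; last first.
  move=> y /(nthP 0) [i]; rewrite size_take_j => lt_ij <-.
  have lt_is : i < size s := leq_trans lt_ij le_js.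
  by rewrite nth_take // above // leqNgt lt_ij.
rewrite (@eq_in_count _ _ predT) ?count_predT ?size_drop //.
move=> y /(nthP 0) [i]; rewrite size_drop => lt_i <-.
by rewrite nth_drop above ?leq_addr // -ltn_subRL.
Qed.

Lemma filter_strip_ends (s : seq nat) d : uniq s -> size s = d.+2 ->
  filter (fun y => (y != nth 0 s 0) && (y != nth 0 s d.+1)) s = take d (behead s).
Proof.
case: s => [|b0 s] //=; case/lastP: s => [|mid bl] //=.
rewrite rcons_uniq mem_rcons inE negb_or size_rcons => /andP[/andP[_ b0_mid]].
case/andP=> bl_mid _ [size_mid].
rewrite nth_rcons size_mid ltnn eqxx eqxx /=.
rewrite filter_rcons eqxx andbF -cats1 -size_mid take_size_cat //.
apply/all_filterP/allP => y y_mid.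
by apply/andP; split; [apply: contraNneq b0_mid | apply: contraNneq bl_mid] => <-.
Qed.

Lemma subset_set_nth (s : seq nat) k x : k < size s -> {subset set_nth 0 s k x <= x :: s}.
Proof.
move=> lt_ks y; rewrite set_nthE lt_ks mem_cat !inE.
by case/or3P=> [/mem_take->|/eqP->|/mem_drop->]; rewrite ?eqxx ?orbT.
Qed.

Lemma interlaceP c e : reflect
  (size e = (size c).+1 /\ forall i, i < size c -> nth 0 e i < nth 0 c i < nth 0 e i.+1)
  (interlace c e).
Proof.
apply: (iffP andP) => [[/eqP-> /allP lt_ce]|[-> lt_ce]]; split => //.
  by move=> i lt_ic; apply: lt_ce; rewrite mem_iota.
by apply/allP => i; rewrite mem_iota => /lt_ce.
Qed.

Section Interlace.
Variables c e : seq nat.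
Hypothesis ce : interlace c e.

Let size_e : size e = (size c).+1. Proof. by case/interlaceP: ce. Qed.
Let lt_ce i : i < size c -> nth 0 e i < nth 0 c i < nth 0 e i.+1.
Proof. by case/interlaceP: ce => _; apply. Qed.

Lemma interlace_sorted : sorted ltn c /\ sorted ltn e.
Proof.
split; apply/(sortedP 0) => i.
  by move=> lt_ic; have /andP[_ ?] := lt_ce (ltnW lt_ic); have /andP[? _] := lt_ce lt_ic; lia.
by rewrite size_e ltnS => /lt_ce; lia.
Qed.

Lemma interlace_ltn_nth i j : i < size c -> j < size e ->
  (nth 0 c i < nth 0 e j) = (i < j).
Proof.
have [_ e_sorted] := interlace_sorted.
move=> lt_ic lt_je; have /andP[lt_eci lt_cei] := lt_ce lt_ic.
have lt_ie : i.+1 < size e by rewrite size_e.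
case: (ltnP i j) => [lt_ij|le_ji].
  by apply: (leq_trans lt_cei); rewrite sorted_leq_nthE.
apply/negbTE; rewrite -leqNgt; apply: leq_trans (ltnW lt_eci).
by rewrite sorted_leq_nthE // ltnW.
Qed.

Lemma interlace_gtn_nth i j : i < size c -> j < size e ->
  (nth 0 e j < nth 0 c i) = (j <= i).
Proof.
have [_ e_sorted] := interlace_sorted.
move=> lt_ic lt_je; case: (leqP j i) => [le_ji|lt_ij].
  have lt_ie : i < size e by rewrite size_e ltnW.
  have /andP[lt_eci _] := lt_ce lt_ic.
  by apply: leq_ltn_trans lt_eci; rewrite sorted_leq_nthE.
by apply/negbTE; rewrite -leqNgt ltnW // interlace_ltn_nth.
Qed.

Lemma interlace_notin x : x \in c -> x \notin e.
Proof.
case/(nthP 0) => i lt_ic <-; apply/negP => /(nthP 0) [j lt_je eq_ec].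
have := interlace_ltn_nth lt_ic lt_je; have := interlace_gtn_nth lt_ic lt_je.
by rewrite eq_ec ltnn; lia.
Qed.

Lemma interlace_within x : x \in c -> nth 0 e 0 < x < nth 0 e (size c).
Proof.
case/(nthP 0) => i lt_ic <-.
by rewrite interlace_gtn_nth ?interlace_ltn_nth ?size_e.
Qed.

End Interlace.

Lemma interlace_exchange_up c e k x : interlace c e -> k < size c ->
    nth 0 c k < x < nth 0 e k.+1 ->
  interlace (set_nth 0 c k x) (set_nth 0 e k (nth 0 c k)).
Proof.
case/interlaceP=> size_e lt_ce lt_kc lt_x; apply/interlaceP.
rewrite !size_set_nth size_e (maxn_idPr lt_kc) (maxn_idPr (leqW lt_kc)).
split=> // j lt_jc; have := lt_ce j lt_jc; have := lt_ce k lt_kc.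
move: lt_x; rewrite !nth_set_nth /=.
by do ?[case: eqP => ?; subst]; lia.
Qed.

Lemma interlace_exchange_down c e k x : interlace c e -> k < size c ->
    nth 0 e k < x < nth 0 c k ->
  interlace (set_nth 0 c k x) (set_nth 0 e k.+1 (nth 0 c k)).
Proof.
case/interlaceP=> size_e lt_ce lt_kc lt_x; apply/interlaceP.
rewrite !size_set_nth size_e (maxn_idPr lt_kc) (maxn_idPr (lt_kc : k.+2 <= (size c).+1)).
split=> // j lt_jc; have := lt_ce j lt_jc; have := lt_ce k lt_kc.
move: lt_x; rewrite !nth_set_nth /=.
by do ?[case: eqP => ?; subst]; lia.
Qed.

Section Elems.
Variable m : nat.
Implicit Types (S : {set 'I_m.+1}) (s : seq nat).

Lemma elems_sorted S : sorted ltn (elems S).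
Proof.
rewrite ltn_sorted_uniq_leq sort_uniq map_inj_uniq ?enum_uniq //; last exact: val_inj.
exact: (sort_sorted leq_total).
Qed.

Lemma size_elems S : size (elems S) = #|S|.
Proof. by rewrite size_sort size_map cardE. Qed.

Lemma mem_elems S v : (val v \in elems S) = (v \in S).
Proof. by rewrite mem_sort (mem_map val_inj) mem_enum. Qed.

Lemma elemsP S x : reflect (exists2 v, v \in S & val v = x) (x \in elems S).
Proof.
rewrite mem_sort; apply: (iffP mapP) => [[v]|[v vS <-]]; last by exists v; rewrite ?mem_enum.
by rewrite mem_enum => vS ->; exists v.
Qed.

Lemma elems_le S x : x \in elems S -> x <= m.
Proof. by case/elemsP=> v _ <-; rewrite -ltnS ltn_ord. Qed.

Lemma elems_inj : injective (@elems m).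
Proof. by move=> S1 S2 eqS; apply/setP => v; rewrite -!mem_elems eqS. Qed.

Lemma elems_filter S (P : pred nat) :
  elems [set v in S | P (val v)] = filter P (elems S).
Proof.
apply: (irr_sorted_eq ltn_trans ltnn (elems_sorted _)).
  exact: (sorted_filter ltn_trans) (elems_sorted S).
move=> x; rewrite mem_filter; apply/elemsP/andP => [[v]|[Px /elemsP[v vS vx]]].
  by rewrite inE => /andP[vS Pv] <-; rewrite Pv mem_elems.
by exists v; rewrite // inE vS vx.
Qed.

Definition seq_set s : {set 'I_m.+1} := [set v | val v \in s].

Lemma elems_seq_set s : sorted ltn s -> all (fun x => x <= m) s ->
  elems (seq_set s) = s.
Proof.
move=> s_sorted s_le; apply: (irr_sorted_eq ltn_trans ltnn (elems_sorted _) s_sorted).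
move=> x; apply/elemsP/idP => [[v]|xs]; first by rewrite inE => vs <-.
have lt_xm : x < m.+1 by rewrite ltnS (allP s_le).
by exists (Ordinal lt_xm); rewrite ?inE.
Qed.

Lemma elems_seq_set_sub s S1 S2 : sorted ltn s -> {subset s <= elems S1 ++ elems S2} ->
  elems (seq_set s) = s.
Proof.
move=> s_sorted s_sub; apply: elems_seq_set => //.
by apply/allP => y /s_sub; rewrite mem_cat => /orP[]/elems_le.
Qed.

Lemma seq_set_subU s S1 S2 : {subset s <= elems S1 ++ elems S2} -> seq_set s \subset S1 :|: S2.
Proof. by move=> s_sub; apply/subsetP => v; rewrite inE => /s_sub; rewrite mem_cat !mem_elems inE. Qed.

End Elems.

Lemma Vm_gt0 m (S : {set 'I_m.+1}) v : S \subset Vm m -> v \in S -> 0 < val v.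
Proof. by move=> SV vS; have := subsetP SV v vS; rewrite inE. Qed.

Lemma card_nu m d (C : {set 'I_m.+1}) : nu d C -> #|C| = d.+1.
Proof. by case/and5P=> /eqP. Qed.

Section Above.
Variable m : nat.
Implicit Types (S C D : {set 'I_m.+1}) (v w : 'I_m.+1).

Definition nabove S v := #|[set w in S | v < w]|.

Definition odd_above S := [set v in S | odd (nabove S v)].
Definition even_above S := [set v in S | ~~ odd (nabove S v)].

Lemma nabove_elems S v : nabove S v = count (fun y => v < y) (elems S).
Proof. by rewrite -size_filter -elems_filter size_elems. Qed.

Lemma nabove_setD1 S v w : w \in S -> nabove S v = nabove (S :\ w) v + (v < w).
Proof.
move=> wS; rewrite /nabove (cardsD1 w) addnC inE wS; congr (_ + _).
by apply: eq_card => u; rewrite !inE andbA.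
Qed.

Lemma nabove_setD1D1 S u v : u \in S -> v \in S -> u != v ->
  nabove S u + nabove S v = (nabove (S :\ u :\ v) u + nabove (S :\ u :\ v) v).+1.
Proof.
move=> uS vS neq_uv; have vSu : v \in S :\ u by rewrite !inE eq_sym neq_uv.
rewrite (nabove_setD1 u uS) (nabove_setD1 v uS) (nabove_setD1 u vSu) (nabove_setD1 v vSu).
rewrite !ltnn; case: ltngtP neq_uv => [_ _|_ _|/val_inj->]; rewrite ?eqxx //=.
  by rewrite !addn0 addn1 addSn.
by rewrite !addn0 addn1 addnS.
Qed.

Lemma nabove_setU C D v : [disjoint C & D] ->
  nabove (C :|: D) v = nabove C v + nabove D v.
Proof.
move=> CD; rewrite /nabove -cardsUI (_ : _ :&: _ = set0) ?cards0 ?addn0.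
  by apply: eq_card => w; rewrite !inE andb_orl.
by rewrite !setIdE; apply/disjoint_setI0/(disjointW (subsetIl _ _) (subsetIl _ _) CD).
Qed.

Section InterlaceSets.
Variables C D : {set 'I_m.+1}.
Hypothesis CD : interlace (elems C) (elems D).

Lemma interlace_disjoint : [disjoint C & D].
Proof.
apply/pred0P => v /=; apply/negbTE/andP.
by rewrite -!mem_elems => -[/(interlace_notin CD)/negP].
Qed.

Lemma card_interlace_setU : #|C :|: D| = #|C|.*2.+1.
Proof.
have [size_D _] := interlaceP _ _ CD.
by rewrite cardsU (disjoint_setI0 interlace_disjoint) cards0 -!size_elems size_D; lia.
Qed.

(* From the top, the elements of [C :|: D] alternate between [D] and [C]. *)
Lemma interlace_odd_nabove v : v \in C :|: D -> odd (nabove (C :|: D) v) = (v \in C).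
Proof.
have [C_sorted D_sorted] := interlace_sorted CD; have [size_D _] := interlaceP _ _ CD.
rewrite nabove_setU ?interlace_disjoint // !nabove_elems.
case/setUP => [vC|vD]; rewrite ?vC ?(disjointFl interlace_disjoint vD);
  [move: (vC) | move: (vD)]; rewrite -mem_elems => /(nthP 0) [i lt_i <-].
- have le_iD : i.+1 <= size (elems D) by rewrite size_D ltnW.
  rewrite (@count_ltn_sorted _ _ i.+1) // => [|k lt_k]; last by rewrite sorted_ltn_nthE.
  rewrite (@count_ltn_sorted _ _ i.+1) // => [|k lt_k]; last by rewrite interlace_ltn_nth.
  by rewrite size_D subSS -(subnSK lt_i) addnS addnn /= odd_double.
- have le_iC : i <= size (elems C) by rewrite -ltnS -size_D.
  rewrite (@count_ltn_sorted _ _ i) // => [|k lt_k]; last by rewrite interlace_gtn_nth.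
  rewrite (@count_ltn_sorted _ _ i.+1) // => [|k lt_k]; last by rewrite sorted_ltn_nthE.
  by rewrite size_D subSS addnn odd_double.
Qed.

Lemma odd_above_interlace : odd_above (C :|: D) = C.
Proof.
apply/setP => v; rewrite inE; case: (boolP (v \in C :|: D)) => [vCD|].
  by rewrite interlace_odd_nabove.
by rewrite inE negb_or => /andP[/negbTE->].
Qed.

Lemma even_above_interlace : even_above (C :|: D) = D.
Proof.
apply/setP => v; rewrite inE; case: (boolP (v \in C :|: D)) => [vCD|].
  rewrite interlace_odd_nabove //; case/setUP: vCD => [vC|vD].
    by rewrite vC (disjointFr interlace_disjoint vC).
  by rewrite vD (disjointFl interlace_disjoint vD).
by rewrite inE negb_or => /andP[_ /negbTE->].
Qed.

End InterlaceSets.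
End Above.

Lemma nu_interlace_within m d (A C : {set 'I_m.+1}) e : nu d A ->
    interlace (elems C) e -> #|C| = d.+1 ->
    (forall v, v \in C -> nth 0 (elems A) 0 <= val v <= nth 0 (elems A) d) ->
  nu d C.
Proof.
move=> nuA Ce cardC C_in; have cardA := card_nu nuA.
case/and5P: nuA => _ AV _ A_wide /andP[a0_neq1 ad_neqm].
have a0_gt0 : 0 < nth 0 (elems A) 0.
  have /elemsP[v vA <-] : nth 0 (elems A) 0 \in elems A by rewrite mem_nth // size_elems cardA.
  exact: Vm_gt0 AV vA.
have ad_le : nth 0 (elems A) d <= m by apply/elems_le/mem_nth; rewrite size_elems cardA.
have c_in i : i <= d -> nth 0 (elems A) 0 <= nth 0 (elems C) i <= nth 0 (elems A) d.
  move=> le_id; have /elemsP[v vC <-] : nth 0 (elems C) i \in elems C.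
    by rewrite mem_nth // size_elems cardC.
  exact: C_in.
have [_ lt_Ce] := interlaceP _ _ Ce; rewrite size_elems cardC in lt_Ce.
rewrite /nu /= cardC eqxx /=; apply/and5P; split.
- by apply/subsetP => v vC; rewrite inE; case/andP: (C_in v vC) => /(leq_trans a0_gt0).
- apply/allP => i; rewrite mem_iota => /andP[_ lt_id].
  by have := lt_Ce i (ltnW lt_id); have := lt_Ce i.+1 lt_id; lia.
- by have := c_in 0 (leq0n d); have := c_in d (leqnn d); lia.
- by have := c_in 0 (leq0n d); lia.
- by have := c_in d (leqnn d); lia.
Qed.

(** * Radon partitions on the moment curve *)

Section MomentCurve.
Local Open Scope ring_scope.
Variables (R : realFieldType) (n m : nat) (t : 'I_m.+1 -> R).
Hypothesis t_incr : forall u v : 'I_m.+1, (0 < val u)%N -> (val u < val v)%N -> t u < t v.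
Implicit Types (S W C P N : {set 'I_m.+1}) (a b lam mu : 'I_m.+1 -> R).

(* [a] is an affine dependence of the points [mpoint n t v]; [k = 0] gives
   [\sum_v a v = 0]. *)
Definition moment_dep a := forall k, (k <= n)%N -> \sum_v a v * t v ^+ k = 0.

Lemma moment_dep_horner a (p : {poly R}) : moment_dep a -> (size p <= n.+1)%N ->
  \sum_v a v * p.[t v] = 0.
Proof.
move=> dep le_pn; under eq_bigr => v _ do rewrite horner_coef big_distrr /=.
rewrite exchange_big big1 // => i _; under eq_bigr => v _ do rewrite mulrCA.
by rewrite -big_distrr /= dep ?mulr0 //; exact: leq_trans (ltn_ord i) le_pn.
Qed.

Definition nodes_poly S : {poly R} := \prod_(w in S) ('X - (t w)%:P).

Lemma size_nodes_poly S : size (nodes_poly S) = #|S|.+1.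
Proof.
have := size_prod_XsubC [seq t w | w <- enum S] id.
by rewrite big_map big_enum size_map -cardE.
Qed.

Lemma horner_nodes_poly S x : (nodes_poly S).[x] = \prod_(w in S) (x - t w).
Proof. by rewrite horner_prod; apply: eq_bigr => w _; rewrite hornerXsubC. Qed.

Lemma nodes_poly_root S w : w \in S -> (nodes_poly S).[t w] = 0.
Proof. by move=> wS; rewrite horner_nodes_poly (bigD1 w) //= subrr mul0r. Qed.

Lemma nodes_poly_sign S v : S \subset Vm m -> (0 < val v)%N -> v \notin S ->
  0 < (-1) ^+ nabove S v * (nodes_poly S).[t v].
Proof.
move=> SV v_gt0 vS; rewrite /nabove horner_nodes_poly (bigID (fun w : 'I_m.+1 => (v < w)%N)) /=.
rewrite (eq_bigl (mem [set w in S | (v < w)%N])) => [|w]; last by rewrite !inE.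
under eq_bigr do rewrite -opprB.
rewrite prodrN -mulrA signrMK.
apply: mulr_gt0; apply: prodr_gt0 => w; rewrite ?inE => /andP[wS].
  by move=> lt_vw; rewrite subr_gt0; apply: t_incr.
rewrite -leqNgt leq_eqVlt => /predU1P[eq_wv|lt_wv].
  by move: vS; rewrite -(val_inj eq_wv) wS.
by rewrite subr_gt0; apply: t_incr; rewrite ?(Vm_gt0 SV).
Qed.

Lemma nodes_poly_neq0 S v : S \subset Vm m -> (0 < val v)%N -> v \notin S ->
  (nodes_poly S).[t v] != 0.
Proof. by move=> SV v_gt0 vS; apply: contraTneq (nodes_poly_sign SV v_gt0 vS) => ->; rewrite mulr0 ltxx. Qed.

Lemma moment_dep_supp_eq0 S a : S \subset Vm m -> (#|S| <= n.+1)%N ->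
  (forall v, v \notin S -> a v = 0) -> moment_dep a -> forall v, a v = 0.
Proof.
move=> SV le_Sn supp dep v; have [vS|/supp//] := boolP (v \in S).
have P_v := nodes_poly_neq0 (subset_trans (subD1set S v) SV) (Vm_gt0 SV vS) (negbT (setD11 v S)).
have size_P : (size (nodes_poly (S :\ v)) <= n.+1)%N.
  by rewrite size_nodes_poly; rewrite (cardsD1 v S) vS add1n in le_Sn.
have := moment_dep_horner dep size_P.
rewrite (bigD1 v) //= big1 ?addr0 => [/eqP|w wv].
  by rewrite mulf_eq0 (negbTE P_v) orbF => /eqP.
have [wS|/supp->] := boolP (w \in S); last by rewrite mul0r.
by rewrite nodes_poly_root ?mulr0 // !inE wv.
Qed.

Lemma exists_moment_dep W : #|W| = n.+2 ->
  exists a, [/\ forall v, v \notin W -> a v = 0, moment_dep a & exists v, a v != 0].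
Proof.
move=> cardW; pose M : 'M[R]_(#|W|, n.+1) := \matrix_(i, k) t (enum_val i) ^+ k.
have [b /sub_kermxP bM b_neq0] : exists2 b : 'rV_#|W|, (b <= kermx M)%MS & b != 0.
  apply/rowV0Pn; rewrite kermx_eq0 /row_free neq_ltn; apply/orP; left.
  by apply: leq_ltn_trans (rank_leq_col M) _; rewrite cardW.
have [i0 b_i0] : exists i0, b 0 i0 != 0.
  apply/existsP; apply: contraNT b_neq0 => /existsPn b0.
  by apply/eqP/rowP => i; rewrite mxE; apply/eqP/negbNE/b0.
pose a v := \sum_(i | enum_val i == v) b 0 i.
exists a; split.
- by move=> v vW; apply: big1 => i /eqP ev_i; rewrite -ev_i enum_valP in vW.
- move=> k le_kn; transitivity ((b *m M) 0 (Ordinal (le_kn : (k < n.+1)%N))); last by rewrite bM mxE.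
  rewrite mxE; under eq_bigr => v _ do rewrite /a big_distrl /=.
  rewrite (exchange_big_dep xpredT) //=; apply: eq_bigr => i _; rewrite mxE.
  by rewrite (big_pred1 (enum_val i)) // => v; rewrite eq_sym.
- exists (enum_val i0); rewrite /a (big_pred1 i0) // => i.
  by rewrite /= (inj_eq enum_val_inj).
Qed.

Lemma moment_dep_sign W a u v : W \subset Vm m -> #|W| = n.+2 ->
    (forall w, w \notin W -> a w = 0) -> moment_dep a ->
    u \in W -> v \in W -> a u != 0 ->
  0 < (-1) ^+ (nabove W u + nabove W v) * (a u * a v).
Proof.
move=> WV cardW supp dep uW vW au_neq0.
have sign_sq k : (-1) ^+ k * (-1) ^+ k = 1 :> R by rewrite -[RHS](signrMK k) mulr1.
have [<-|neq_uv] := eqVneq u v.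
  by rewrite exprD sign_sq mul1r -expr2 exprn_even_gt0 //= au_neq0 orbT.
pose S := W :\ u :\ v.
have SV : S \subset Vm m := subset_trans (subset_trans (subD1set _ v) (subD1set W u)) WV.
have uS : u \notin S by rewrite !inE eqxx andbF.
have vS : v \notin S by rewrite !inE eqxx.
have size_P : (size (nodes_poly S) <= n.+1)%N.
  rewrite size_nodes_poly /S; have := cardsD1 u W; have := cardsD1 v (W :\ u).
  by rewrite uW !inE eq_sym neq_uv vW cardW; lia.
have eq_uv : a u * (nodes_poly S).[t u] + a v * (nodes_poly S).[t v] = 0.
  rewrite -(moment_dep_horner dep size_P) (bigD1 u) //= (bigD1 v) 1?eq_sym //= addrA.
  rewrite [X in _ = _ + X]big1 ?addr0 // => w /andP[wv wu].
  have [wW|/supp->] := boolP (w \in W); last by rewrite mul0r.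
  by rewrite nodes_poly_root ?mulr0 // !inE wv wu.
have sign_u := nodes_poly_sign SV (Vm_gt0 WV uW) uS.
have sign_v := nodes_poly_sign SV (Vm_gt0 WV vW) vS.
rewrite (nabove_setD1D1 uW vW neq_uv) exprS exprD mulN1r -(pmulr_lgt0 _ (mulr_gt0 sign_u sign_v)).
set su := (-1) ^+ _ in sign_u *; set sv := (-1) ^+ _ in sign_v *.
set pu := (nodes_poly S).[t u] in eq_uv sign_u *; set pv := (nodes_poly S).[t v] in eq_uv sign_v *.
have av_pv : a v * pv = - (a u * pu) by apply/eqP; rewrite -addr_eq0 addrC eq_uv.
have pu_neq0 : pu != 0 by apply: contraTneq sign_u => ->; rewrite mulr0 ltxx.
have -> : - (su * sv) * (a u * a v) * (su * pu * (sv * pv)) =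
    - ((su * su) * (sv * sv)) * ((a u * pu) * (a v * pv)) by ring.
rewrite av_pv !sign_sq mul1r mulN1r mulrN opprK -expr2 exprn_even_gt0 //=.
by rewrite mulf_neq0.
Qed.

Lemma moment_depZ c a : moment_dep a -> moment_dep (fun v => c * a v).
Proof.
by move=> dep k le_kn; under eq_bigr do rewrite -mulrA; rewrite -big_distrr /= dep ?mulr0.
Qed.

Lemma sum_mpoint_entry a (k : 'I_n) :
  (\sum_v a v *: mpoint n t v) 0 k = \sum_v a v * t v ^+ k.+1.
Proof. by rewrite summxE; apply: eq_bigr => v _; rewrite !mxE. Qed.

Lemma moment_dep_sum_mpoint a : moment_dep a -> \sum_v a v *: mpoint n t v = 0.
Proof.
by move=> dep; apply/rowP => k; rewrite sum_mpoint_entry mxE dep.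
Qed.

Lemma moment_dep_sub lam mu (x : 'rV[R]_n) : \sum_v lam v = 1 -> \sum_v mu v = 1 ->
    x = \sum_v lam v *: mpoint n t v -> x = \sum_v mu v *: mpoint n t v ->
  moment_dep (fun v => lam v - mu v).
Proof.
move=> lam1 mu1 x_lam x_mu [_|k lt_kn].
  by under eq_bigr do rewrite expr0 mulr1; rewrite sumrB lam1 mu1 subrr.
under eq_bigr do rewrite mulrBl.
by rewrite sumrB -!(sum_mpoint_entry _ (Ordinal lt_kn)) -x_lam -x_mu subrr.
Qed.

Definition in_pos_conv S (x : 'rV[R]_n) := exists lam : 'I_m.+1 -> R,
  [/\ forall v, v \in S -> 0 < lam v, forall v, v \notin S -> lam v = 0,
      \sum_v lam v = 1 & x = \sum_v lam v *: mpoint n t v].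

Lemma pos_conv_conv S (x : 'rV[R]_n) : in_pos_conv S x -> in_conv t S x.
Proof.
case=> lam [lam_gt0 lam_supp lam1 x_lam]; exists lam; split => // v.
by case: (boolP (v \in S)) => [/lam_gt0/ltW|/lam_supp->].
Qed.

Lemma sub_in_conv S S' (x : 'rV[R]_n) : S \subset S' -> in_conv t S x -> in_conv t S' x.
Proof.
move=> SS' [lam [lam_ge0 lam_supp lam1 x_lam]]; exists lam; split => // v vS'.
by apply: lam_supp; apply: contra vS'; apply: subsetP.
Qed.

Lemma pos_conv_subset S C S' (x : 'rV[R]_n) : S \subset Vm m -> (#|S| <= n.+1)%N ->
    C \subset S -> S' \subset S -> in_pos_conv C x -> in_conv t S' x ->
  C \subset S'.
Proof.
move=> SV le_Sn CS S'S [lam [lam_gt0 lam_supp lam1 x_lam]] [mu [_ mu_supp mu1 x_mu]].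
have lam_mu : forall v, lam v - mu v = 0.
  apply: moment_dep_supp_eq0 SV le_Sn _ (moment_dep_sub lam1 mu1 x_lam x_mu) => v vS.
  by rewrite lam_supp ?mu_supp ?subr0 //; apply: contra vS; apply: subsetP.
apply/subsetP => v vC; apply: contraTT (lam_gt0 v vC) => vS'.
by move/eqP: (lam_mu v); rewrite subr_eq0 mu_supp // => /eqP->; rewrite ltxx.
Qed.

Lemma moment_dep_pos_conv P N b : [disjoint P & N] -> (exists v, v \in P) ->
    (forall v, v \in P -> 0 < b v) -> (forall v, v \in N -> b v < 0) ->
    (forall v, v \notin P :|: N -> b v = 0) -> moment_dep b ->
  exists x, in_pos_conv P x /\ in_pos_conv N x.
Proof.
move=> PN [v0 v0P] b_pos b_neg b_supp dep.
pose s := \sum_(v in P) b v.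
have s_gt0 : 0 < s.
  rewrite /s (bigD1 v0) //=; apply: (lt_le_trans (b_pos _ v0P)).
  by rewrite lerDl sumr_ge0 // => v /andP[vP _]; apply/ltW/b_pos.
pose lam v := if v \in P then s^-1 * b v else 0.
pose mu v := if v \in N then - (s^-1 * b v) else 0.
have lam_mu v : lam v - mu v = s^-1 * b v.
  rewrite /lam /mu; case: (boolP (v \in P)) => [vP|vP].
    by rewrite (disjointFr PN vP) subr0.
  case: (boolP (v \in N)) => [vN|vN]; first by rewrite sub0r opprK.
  by rewrite b_supp ?mulr0 ?subrr // inE negb_or vP vN.
have dep_s := moment_depZ s^-1 dep.
have lam1 : \sum_v lam v = 1 by rewrite -big_mkcond -mulr_sumr mulVf ?gt_eqF.
have mu1 : \sum_v mu v = 1.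
  have := dep_s 0%N (leq0n n); under eq_bigr do rewrite expr0 mulr1 -lam_mu.
  by rewrite sumrB lam1 => /eqP; rewrite subr_eq0 => /eqP<-.
exists (\sum_v lam v *: mpoint n t v); split; [exists lam | exists mu]; split => //.
- by move=> v vP; rewrite /lam vP mulr_gt0 ?invr_gt0 ?b_pos.
- by move=> v /negbTE vP; rewrite /lam vP.
- by move=> v vN; rewrite /mu vN oppr_gt0 pmulr_rlt0 ?invr_gt0 ?b_neg.
- by move=> v /negbTE vN; rewrite /mu vN.
- apply/eqP; rewrite -subr_eq0 -sumrB; under eq_bigr do rewrite -scalerBl lam_mu.
  by rewrite moment_dep_sum_mpoint.
Qed.

Lemma radon_moment_curve W : W \subset Vm m -> #|W| = n.+2 ->
  exists x, in_pos_conv (even_above W) x /\ in_pos_conv (odd_above W) x.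
Proof.
move=> WV cardW; have [a [a_supp dep [v0 av0]]] := exists_moment_dep cardW.
(* Normalised at the top point of [W], the dependence is positive exactly on
   [even_above W]. *)
have v0W : v0 \in W by apply: contraTT av0 => /a_supp->; rewrite eqxx.
have [top topW top_max] : exists2 top, top \in W & forall w, w \in W -> (val w <= val top)%N.
  by case: (arg_maxnP val v0W) => top; exists top.
have above_top : nabove W top = 0%N.
  by apply: eq_card0 => w; rewrite !inE ltnNge; case: (boolP (w \in W)) => // /top_max->.
have atop : a top != 0.
  apply: contraTneq (moment_dep_sign WV cardW a_supp dep v0W topW av0) => ->.
  by rewrite !mulr0 ltxx.
have sign_a v : v \in W -> 0 < (-1) ^+ nabove W v * (a top * a v).
  by move=> vW; have := moment_dep_sign WV cardW a_supp dep topW vW atop; rewrite above_top.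
apply: (moment_dep_pos_conv (b := fun v => a top * a v)) (moment_depZ _ dep).
- by apply/pred0P => v /=; rewrite !inE; case: (odd _); rewrite /= ?andbF.
- by exists top; rewrite inE topW above_top.
- by move=> v /setIdP[vW /negbTE even_v]; have := sign_a v vW; rewrite -signr_odd even_v mul1r.
- by move=> v /setIdP[vW odd_v]; have := sign_a v vW; rewrite -signr_odd odd_v mulN1r oppr_gt0.
- move=> v; rewrite !inE -andb_orr orNb andbT => /a_supp->; exact: mulr0.
Qed.

Lemma triangulation_no_radon_split T S1 S2 W : triangulates n t (Vm m) T ->
    S1 \in T -> S2 \in T -> #|W| = n.+2 ->
    odd_above W \subset S1 -> even_above W \subset S2 -> False.
Proof.
move=> [T_sub T_meet _] S1T S2T cardW oddS1 evenS2.
have [S1V cardS1] := T_sub _ S1T; have [S2V cardS2] := T_sub _ S2T.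
have W_split : W = odd_above W :|: even_above W.
  by apply/setP => v; rewrite !inE -andb_orr orbN andbT.
have WV : W \subset Vm m.
  by rewrite W_split subUset (subset_trans oddS1 S1V) (subset_trans evenS2 S2V).
have [x [x_even x_odd]] := radon_moment_curve WV cardW.
have x_S12 : in_conv t (S1 :&: S2) x.
  apply/(T_meet _ _ S1T S2T); split.
    exact: sub_in_conv oddS1 (pos_conv_conv x_odd).
  exact: sub_in_conv evenS2 (pos_conv_conv x_even).
have oddS12 : odd_above W \subset S1 :&: S2.
  by apply: pos_conv_subset S1V _ oddS1 (subsetIl _ _) x_odd x_S12; rewrite cardS1.
have : W \subset S2 by rewrite W_split subUset evenS2 (subset_trans oddS12 (subsetIr _ _)).
by move/subset_leq_card; rewrite cardW cardS2 ltnn.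
Qed.

End MomentCurve.

(** * The increasing flip *)

Section IncreasingFlip.
Variables (R : realFieldType) (m d : nat) (t : 'I_m.+1 -> R).
Variables (T : {set {set 'I_m.+1}}) (A B : {set 'I_m.+1}).
Implicit Types (S C D F Sg : {set 'I_m.+1}).
Hypothesis t_incr : forall u v : 'I_m.+1, 0 < val u -> val u < val v -> (t u < t v)%R.
Hypothesis T_tri : triangulates d.*2.+1 t (Vm m) T.
Hypothesis nuA : nu d A.
Hypothesis BV : B \subset Vm m.
Hypothesis AB : interlace (elems A) (elems B).
Hypothesis T_lower : [set S in T | S \subset A :|: B] = lower_tri d.*2.+1 (A :|: B).

Let cardA : #|A| = d.+1. Proof. exact: card_nu nuA. Qed.
Let cardB : #|B| = d.+2. Proof. by case/interlaceP: AB; rewrite !size_elems cardA. Qed.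

Lemma lower_facet_in_T b : b \in B -> (A :|: B) :\ b \in T.
Proof.
move=> bB; suff : (A :|: B) :\ b \in lower_tri d.*2.+1 (A :|: B).
  by rewrite -T_lower inE => /andP[].
have bU : b \in A :|: B by rewrite inE bB orbT.
rewrite inE subD1set /=; apply/andP; split.
  by have := cardsD1 b (A :|: B); rewrite card_interlace_setU // cardA bU add1n => -[<-].
apply/forall_inP => w /setDP[wU]; rewrite in_setD1 wU andbT negbK => /eqP->.
change (~~ odd (nabove ((A :|: B) :\ b) b)).
have := nabove_setD1 b bU; rewrite ltnn addn0 => <-.
by rewrite interlace_odd_nabove // (disjointFl (interlace_disjoint AB) bB).
Qed.

Lemma sub_lower_facet S : S \subset A :|: B -> ~~ (B \subset S) ->
  exists2 F, F \in T & S \subset F.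
Proof.
move=> SU /subsetPn[b bB bS]; exists ((A :|: B) :\ b); first exact: lower_facet_in_T.
by apply/subsetP => v vS; rewrite in_setD1 (subsetP SU) // andbT; apply: contraNneq bS => <-.
Qed.

Lemma elems_inner : elems (inner d B) = take d (behead (elems B)).
Proof.
rewrite -filter_strip_ends ?size_elems ?cardB //; last exact: (sorted_uniq ltn_trans ltnn (elems_sorted B)).
exact: (elems_filter B (fun y => (y != _) && (y != _))).
Qed.

Lemma inner_support : is_support d (simp d T) A (inner d B).
Proof.
have [size_B lt_BA] := interlaceP _ _ AB; rewrite size_elems cardA in lt_BA.
have size_inner : size (elems (inner d B)) = d.
  by rewrite elems_inner size_takel // size_behead size_B size_elems cardA.
have inner_B : inner d B \subset B by rewrite /inner setIdE subsetIl.
split.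
- by rewrite -size_elems size_inner.
- exact: subset_trans inner_B BV.
- apply/interlaceP; rewrite size_inner size_elems cardA; split=> // i lt_id.
  rewrite elems_inner nth_take // nth_behead /=.
  by have /andP[_ ->] := lt_BA i (ltnW lt_id); have /andP[-> _] := lt_BA i.+1 lt_id.
- move=> C nuC C_A_inner; rewrite inE nuC /=.
  have C_AB : C \subset A :|: B := subset_trans C_A_inner (setUS A inner_B).
  have notBC : ~~ (B \subset C).
    by apply/negP => /subset_leq_card; rewrite cardB (card_nu nuC) ltnn.
  by have [F FT CF] := sub_lower_facet C_AB notBC; apply/exists_inP; exists F.
Qed.

Lemma simp_face_no_interlace C D F : C \in simp d T -> F \in T -> D \subset F ->
  ~~ interlace (elems C) (elems D).
Proof.
case/setIdP=> nuC /exists_inP[S ST CS] FT DF; apply/negP => CD.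
apply: (triangulation_no_radon_split t_incr T_tri ST FT (W := C :|: D)).
- by rewrite card_interlace_setU // (card_nu nuC) doubleS.
- by rewrite odd_above_interlace.
- by rewrite even_above_interlace.
Qed.

Lemma support_exchange_contra Sg k l x : is_support d (simp d T) A Sg ->
    x \in elems Sg -> k <= d -> l <= d.+1 ->
  ~~ interlace (set_nth 0 (elems A) k x) (set_nth 0 (elems B) l (nth 0 (elems A) k)).
Proof.
move=> [cardSg _ SgA Sg_supp] xSg le_kd le_ld.
set a_k := nth 0 (elems A) k; set cs := set_nth _ _ _ _; set es := set_nth _ _ _ _.
apply/negP => cs_es; have [cs_sorted es_sorted] := interlace_sorted cs_es.
have lt_kA : k < size (elems A) by rewrite size_elems cardA.
have lt_lB : l < size (elems B) by rewrite size_elems cardB.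
have a_kA : a_k \in elems A by rewrite mem_nth.
have cs_sub : {subset cs <= elems A ++ elems Sg}.
  by move=> y /(subset_set_nth lt_kA); rewrite inE mem_cat => /orP[/eqP->|->]; rewrite ?xSg ?orbT.
have es_sub : {subset es <= elems A ++ elems B}.
  by move=> y /(subset_set_nth lt_lB); rewrite inE mem_cat => /orP[/eqP->|->]; rewrite ?a_kA ?orbT.
have elemsC : elems (seq_set m cs) = cs := elems_seq_set_sub cs_sorted cs_sub.
have elemsD : elems (seq_set m es) = es := elems_seq_set_sub es_sorted es_sub.
have size_es : size es = #|B| by rewrite size_set_nth (maxn_idPr lt_lB) size_elems.
have nuC : nu d (seq_set m cs).
  apply: (nu_interlace_within nuA (e := es)); rewrite ?elemsC //.
    by rewrite -size_elems elemsC size_set_nth (maxn_idPr lt_kA) size_elems.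
  move=> v; rewrite inE => /cs_sub; rewrite mem_cat => /orP[vA|vSg].
    by have := sorted_within (elems_sorted A) vA; rewrite size_elems cardA.
  by case/andP: (interlace_within SgA vSg); rewrite size_elems cardSg => /ltnW-> /ltnW->.
have notBD : ~~ (B \subset seq_set m es).
  apply/negP => BD; have eqBD : B = seq_set m es.
    by apply/eqP; rewrite eqEcard BD -size_elems elemsD size_es leqnn.
  have : a_k \in es.
    have <- : nth 0 es l = a_k by rewrite nth_set_nth /= eqxx.
    by rewrite mem_nth // size_es -size_elems.
  by rewrite -elemsD -eqBD; apply/negP/(interlace_notin AB).
have [F FT DF] := sub_lower_facet (seq_set_subU es_sub) notBD.
have := simp_face_no_interlace (Sg_supp _ nuC (seq_set_subU cs_sub)) FT DF.
by rewrite elemsC elemsD cs_es.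
Qed.

Lemma support_unique Sg : is_support d (simp d T) A Sg -> Sg = inner d B.
Proof.
move=> supp; have [cardSg _ SgA _] := supp.
have [_ lt_SgA] := interlaceP _ _ SgA; rewrite size_elems cardSg in lt_SgA.
have [_ lt_BA] := interlaceP _ _ AB; rewrite size_elems cardA in lt_BA.
apply: elems_inj; apply: (@eq_from_nth _ 0).
  by rewrite elems_inner size_takel ?size_behead size_elems ?cardSg ?cardB.
rewrite size_elems cardSg => i lt_id; rewrite elems_inner nth_take // nth_behead /=.
set x := nth 0 (elems Sg) i.
have xSg : x \in elems Sg by rewrite mem_nth // size_elems cardSg.
have /andP[a_x x_a] := lt_SgA i lt_id.
have lt_iA : i < size (elems A) by rewrite size_elems cardA ltnW.
(* If [x < b_(i+1)], [x] replaces [a_i] and [a_i] replaces [b_i]; otherwise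
   [x] replaces [a_(i+1)] and [a_(i+1)] replaces [b_(i+2)]. *)
case: (ltngtP x (nth 0 (elems B) i.+1)) => // [x_b|b_x]; exfalso.
- have /negP := support_exchange_contra supp xSg (ltnW lt_id) (leqW (ltnW lt_id)); apply.
  by apply: interlace_exchange_up => //; apply/andP.
- have /negP := support_exchange_contra (k := i.+1) (l := i.+2) supp xSg lt_id lt_id; apply.
  by apply: interlace_exchange_down; rewrite ?size_elems ?cardA //; apply/andP.
Qed.

End IncreasingFlip.

Unset Implicit Arguments. Set Strict Implicit. Set Printing Implicit Defensive.

Theorem lemma3p7 (R : realFieldType) (m d : nat) (t : 'I_m.+1 -> R)
    (T : {set {set 'I_m.+1}}) (A B : {set 'I_m.+1}) :
  (forall u v : 'I_m.+1, 0 < val u -> val u < val v -> (t u < t v)%R) ->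
  triangulates (d.*2.+1) t (Vm m) T ->
  (* A is a mutable d-simplex of T replaced by B in the increasing flip *)
  A \in simp d T ->
  #|B| = d.+2 -> B \subset Vm m ->
  interlace (elems A) (elems B) ->
  triangulates (d.*2.+1) t (A :|: B) [set S in T | S \subset A :|: B] ->
  [set S in T | S \subset A :|: B] = lower_tri (d.*2.+1) (A :|: B) ->
  (* conclusion: B' is the unique support of A w.r.t. simp(T) *)
  is_support d (simp d T) A (inner d B) /\
  (forall Sigma, is_support d (simp d T) A Sigma -> Sigma = inner d B).
Proof.
(* [#|B| = d.+2] follows from the interlacing, and the triangulation induced on
   [A :|: B] is only needed through its facets, given by the last hypothesis. *)
move=> t_incr T_tri /setIdP[nuA _] _ BV AB _ T_lower.
split; first exact: inner_support nuA BV AB T_lower.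
by move=> Sg; apply: support_unique t_incr T_tri nuA AB T_lower Sg.
Qed.
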